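(* Let $d\ge 2$ and let $A$ be a finite set of hyperplanes in $\mathbb{R}^d$. For every open halfspace $S_1$ and every set $S_2\subseteq\mathbb{R}^d$, $$\mu_A(S_1\cup S_2)\le R_d\big(\mu_A(S_1)+1,\ \mu_A(S_2)+1\big)-1.$$
   Context: For a finite set $A$ of hyperplanes in $\mathbb{R}^d$, $V(A)$ (the vertices of the arrangement) is the set of points that are the unique common point of some $d$ hyperplanes of $A$. For $S\subseteq\mathbb{R}^d$, $\mu_A(S)=\max\{|A'| : A'\subseteq A,\ V(A')\subseteq S\}$. For positive integers $p,a,b$, $R_p(a,b)$ is the hypergraph Ramsey number: the least $R$ such that for every set $S$ of size $R$ and every 2-colouring of the $p$-element subsets of $S$ with colours 1 and 2, there is either an $a$-element subset all of whose $p$-subsets have colour 1 or a $b$-element subset all of whose $p$-subsets have colour 2. *)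

(* Points of R^d are row vectors 'rV[R]_d over an arbitrary
   real field R (the paper's R = the reals is an instance). *)
From HB Require Import structures.
From mathcomp Require Import all_boot all_order all_algebra.
Set Implicit Arguments. Unset Strict Implicit. Unset Printing Implicit Defensive.
Import Order.TTheory GRing.Theory Num.Theory.
Local Open Scope ring_scope.

Definition dotv (R : realFieldType) (d : nat) (u v : 'rV[R]_d) : R :=
  \sum_(i < d) u 0 i * v 0 i.

(* An arrangement of n hyperplanes in R^d: hyperplane i is
   { x | dotv (a i) x = b i } with a i <> 0; distinct indices give
   distinct hyperplanes (so A is a finite SET of hyperplanes). *)
Definition on_hyp (R : realFieldType) (d n : nat)
  (a : 'I_n -> 'rV[R]_d) (b : 'I_n -> R) (i : 'I_n) (x : 'rV[R]_d) : Prop :=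
  dotv (a i) x = b i.

Definition arrangement (R : realFieldType) (d n : nat)
  (a : 'I_n -> 'rV[R]_d) (b : 'I_n -> R) : Prop :=
  (forall i, a i != 0) /\
  (forall i j, (forall x, on_hyp a b i x <-> on_hyp a b j x) -> i = j).

Definition is_vertex (R : realFieldType) (d n : nat)
  (a : 'I_n -> 'rV[R]_d) (b : 'I_n -> R) (A' : {set 'I_n}) (p : 'rV[R]_d) : Prop :=
  exists B : {set 'I_n}, B \subset A' /\ #|B| = d /\
    (forall i, i \in B -> on_hyp a b i p) /\
    (forall q, (forall i, i \in B -> on_hyp a b i q) -> q = p).

Definition vertices_in (R : realFieldType) (d n : nat)
  (a : 'I_n -> 'rV[R]_d) (b : 'I_n -> R) (A' : {set 'I_n})
  (S : 'rV[R]_d -> Prop) : Prop :=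
  forall p, is_vertex a b A' p -> S p.

Definition is_mu (R : realFieldType) (d n : nat)
  (a : 'I_n -> 'rV[R]_d) (b : 'I_n -> R) (S : 'rV[R]_d -> Prop) (m : nat) : Prop :=
  (exists A' : {set 'I_n}, vertices_in a b A' S /\ #|A'| = m) /\
  (forall A' : {set 'I_n}, vertices_in a b A' S -> (#|A'| <= m)%N).

Definition ramsey_prop (p a b N : nat) : Prop :=
  forall c : {set 'I_N} -> bool,
    exists T : {set 'I_N},
      (#|T| = a /\ forall P : {set 'I_N}, P \subset T -> #|P| = p -> c P = true) \/
      (#|T| = b /\ forall P : {set 'I_N}, P \subset T -> #|P| = p -> c P = false).

Definition is_ramsey (p a b r : nat) : Prop :=
  ramsey_prop p a b r /\ (forall N, ramsey_prop p a b N -> (r <= N)%N).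

Definition open_halfspace (R : realFieldType) (d : nat) (S : 'rV[R]_d -> Prop) : Prop :=
  exists (c : 'rV[R]_d) (e : R), c != 0 /\ forall x, S x <-> e < dotv c x.

(* Take A' ⊆ A of size μ_A(S1 ∪ S2) with V(A') ⊆ S1 ∪ S2 and colour a
   d-subset of A' by whether it has a unique common point lying in S1.  If
   |A'| ≥ R_d(μ_A(S1)+1, μ_A(S2)+1), Ramsey's theorem yields either
   μ_A(S1)+1 hyperplanes all of whose vertices lie in S1, or μ_A(S2)+1
   hyperplanes none of whose vertices lies in S1, hence all in S2; both
   contradict the maximality defining μ_A. *)
From HB Require Import structures.
From mathcomp Require Import all_boot all_order all_algebra.
From mathcomp Require Import boolp.
Import Order.TTheory GRing.Theory Num.Theory.
Local Open Scope ring_scope.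
Set Implicit Arguments. Unset Strict Implicit.

Definition homogeneous (T : finType) (c : {set T} -> bool) (p : nat)
    (B : {set T}) (col : bool) : Prop :=
  forall P : {set T}, P \subset B -> #|P| = p -> c P = col.

Lemma subset_imset_inj (aT rT : finType) (f : aT -> rT) (T : {set aT})
    (P : {set rT}) :
  injective f -> P \subset f @: T -> exists2 P' : {set aT}, P' \subset T & P = f @: P'.
Proof.
move=> f_inj sPT; exists [set x in T | f x \in P].
  by apply/subsetP=> x; rewrite inE => /andP[].
apply/setP=> y; apply/idP/imsetP=> [yP | [x + ->]]; last by rewrite inE => /andP[].
have /imsetP[x xT yE] := subsetP sPT y yP.
by exists x => //; rewrite inE xT -yE.
Qed.

Lemma ramsey_prop_subset (p k1 k2 N : nat) (T : finType) (A : {set T})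
    (c : {set T} -> bool) :
  ramsey_prop p k1 k2 N -> (N <= #|A|)%N ->
  exists2 B : {set T}, B \subset A &
    (#|B| = k1 /\ homogeneous c p B true) \/
    (#|B| = k2 /\ homogeneous c p B false).
Proof.
move=> ram leNA.
pose f (i : 'I_N) : T := enum_val (widen_ord leNA i).
have f_inj : injective f by move=> i j /enum_val_inj [] /val_inj.
have [B0 hB0] := ram (fun P : {set 'I_N} => c (f @: P)).
have homog_imset col : homogeneous (fun P : {set 'I_N} => c (f @: P)) p B0 col ->
    homogeneous c p (f @: B0) col.
  move=> hB P sPB cP; have [P' sPB0 PE] := subset_imset_inj f_inj sPB.
  by rewrite PE; apply: hB => //; rewrite -cP PE card_imset.
exists (f @: B0); first by apply/subsetP=> _ /imsetP[i _ ->]; apply: enum_valP.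
rewrite card_imset //.
by case: hB0 => [[cB hB] | [cB hB]]; [left | right]; split=> //; apply: homog_imset.
Qed.

Section Arrangement.

Variables (R : realFieldType) (d n : nat) (a : 'I_n -> 'rV[R]_d) (b : 'I_n -> R).

Definition determines (B : {set 'I_n}) (p : 'rV[R]_d) : Prop :=
  (forall i, i \in B -> on_hyp a b i p) /\
  (forall q, (forall i, i \in B -> on_hyp a b i q) -> q = p).

Definition vertex_colour (S : 'rV[R]_d -> Prop) (B : {set 'I_n}) : bool :=
  `[< exists p, determines B p /\ S p >].

Lemma vertices_inS (A1 A2 : {set 'I_n}) (S : 'rV[R]_d -> Prop) :
  A1 \subset A2 -> vertices_in a b A2 S -> vertices_in a b A1 S.
Proof.
move=> sA12 VA2 p [B [sBA1 vB]]; apply: VA2.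
by exists B; split=> //; apply: subset_trans sA12.
Qed.

Lemma homogeneous_vertices_in (S : 'rV[R]_d -> Prop) (B : {set 'I_n}) :
  homogeneous (vertex_colour S) d B true -> vertices_in a b B S.
Proof.
move=> hB p [B0 [sB0B [cB0 [onp unip]]]].
have /asboolP[q [[onq _] Sq]] := hB B0 sB0B cB0.
by rewrite -(unip q onq).
Qed.

Lemma homogeneous_vertices_notin (S S' : 'rV[R]_d -> Prop) (B : {set 'I_n}) :
  vertices_in a b B (fun x => S x \/ S' x) ->
  homogeneous (vertex_colour S) d B false -> vertices_in a b B S'.
Proof.
move=> VB hB p vp; case: (VB p vp) => // Sp.
have [B0 [sB0B [cB0 dB0]]] := vp.
have /asboolPn[] : ~~ vertex_colour S B0 by rewrite hB.
by exists p.
Qed.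

End Arrangement.

Theorem lemma2 (R : realFieldType) (d n : nat) (a : 'I_n -> 'rV[R]_d) (b : 'I_n -> R)
  (S1 S2 : 'rV[R]_d -> Prop) (m1 m2 m r : nat) :
  (2 <= d)%N -> arrangement a b -> open_halfspace S1 ->
  is_mu a b S1 m1 -> is_mu a b S2 m2 ->
  is_mu a b (fun x => S1 x \/ S2 x) m ->
  is_ramsey d m1.+1 m2.+1 r ->
  (m <= r - 1)%N.
Proof.
move=> _ _ _ [_ mu1] [_ mu2] [[A' [VA' <-]] _] [ram _].
rewrite leqNgt; apply/negP => ltrA'.
have leA' : (r <= #|A'|)%N by move: ltrA'; case: r {ram} => //= r; rewrite subn1.
have [B sBA' [[cB hB] | [cB hB]]] :=
  ramsey_prop_subset (vertex_colour a b S1) ram leA'.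
- by have := mu1 B (homogeneous_vertices_in hB); rewrite cB ltnn.
- have VB := vertices_inS sBA' VA'.
  by have := mu2 B (homogeneous_vertices_notin VB hB); rewrite cB ltnn.
Qed.
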